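(* Let $g\in\mathcal{S}'(\mathbb{R})$ be supported in $[0,\infty)$ and let $a,b$ be constants. Suppose that, as $\lambda\to\infty$, $$g(\lambda x)=a\frac{\delta(x)}{\lambda}+b\frac{\log\lambda}{\lambda}\delta(x)+\frac{b}{\lambda}\operatorname{Pf}\left(\frac{H(x)}{x}\right)+o\left(\frac{1}{\lambda}\right)\quad\text{in }\mathcal{S}'(\mathbb{R}).$$ Then $$\mathcal{L}\{g;y\}=a-b\gamma+b\log\left(\frac{1}{y}\right)+o(1),\qquad y\to 0^+,$$ where $\gamma$ is Euler's constant.
   Context: $\delta$ is the Dirac delta and $H$ the Heaviside function (characteristic function of $[0,\infty)$). The distribution $\operatorname{Pf}(H(x)/x)$ is defined by $\langle \operatorname{Pf}(H(x)/x),\phi\rangle=\int_0^1\frac{\phi(x)-\phi(0)}{x}\,dx+\int_1^\infty\frac{\phi(x)}{x}\,dx$. For a distribution $g$, $g(\lambda x)$ is the distribution $\phi\mapsto \lambda^{-1}\langle g(x),\phi(x/\lambda)\rangle$. An asymptotic relation ''$g(\lambda x)=c_1(\lambda)g_1(x)+c_2(\lambda)g_2(x)+o(c_2(\lambda))$ in $\mathcal{S}'(\mathbb{R})$'' means that for every $\phi\in\mathcal{S}(\mathbb{R})$, $\langle g(\lambda x),\phi(x)\rangle=c_1(\lambda)\langle g_1,\phi\rangle+c_2(\lambda)\langle g_2,\phi\rangle+o(c_2(\lambda))$. For $g\in\mathcal{S}'(\mathbb{R})$ supported in $[0,\infty)$, its Laplace transform is $\mathcal{L}\{g;y\}=\langle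 g(x),e^{-yx}\rangle$, $y>0$ (well defined since $g$ is supported in $[0,\infty)$). *)

From Stdlib Require Import Reals Lra.
From Coquelicot Require Import Coquelicot.
Open Scope R_scope.

Definition smooth (f : R -> R) : Prop :=
  forall (n : nat) (x : R), ex_derive (Derive_n f n) x.

Definition schwartz (f : R -> R) : Prop :=
  smooth f /\
  forall k n : nat, exists C : R, forall x : R,
    Rabs x ^ k * Rabs (Derive_n f n x) <= C.

(* Tempered distributions: linear functionals on S(R), continuous for the
   Schwartz topology, i.e. bounded by a finite combination of the seminorms
   sup_x |x|^k |f^(n)(x)|, k,n <= N. *)
Definition tempered (T : (R -> R) -> R) : Prop :=
  (forall f h, schwartz f -> schwartz h -> T (fun x => f x + h x) = T f + T h) /\
  (forall (c : R) f, schwartz f -> T (fun x => c * f x) = c * T f) /\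
  (exists (C : R) (N : nat), forall f (M : R), schwartz f ->
     (forall k n : nat, (k <= N)%nat -> (n <= N)%nat -> forall x : R,
        Rabs x ^ k * Rabs (Derive_n f n x) <= M) ->
     Rabs (T f) <= C * M).

(* supp T is contained in [0, +oo): T vanishes on every smooth test function
   with compact support contained in (-oo, 0). *)
Definition supported_nonneg (T : (R -> R) -> R) : Prop :=
  forall f : R -> R, smooth f ->
    (exists L r : R, r < 0 /\ forall x, (x <= L \/ r <= x) -> f x = 0) ->
    T f = 0.

(* The dilated distribution g(lambda x): phi |-> lambda^{-1} <g, phi(x/lambda)>. *)
Definition dilate (T : (R -> R) -> R) (lam : R) : (R -> R) -> R :=
  fun f => / lam * T (fun x => f (x / lam)).

Definition dirac (f : R -> R) : R := f 0.

Definition pf_H_over_x (f : R -> R) : R :=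
  RInt (fun x => (f x - f 0) / x) 0 1
  + real (Lim (fun M => RInt (fun x => f x / x) 1 M) p_infty).

(* Cutoffs used to define <g(x), e^{-yx}> for g supported in [0,oo):
   smooth, equal to 1 on a neighbourhood [-e, oo) of [0,oo), zero near -oo. *)
Definition cutoff (rho : R -> R) : Prop :=
  smooth rho /\
  (exists e : R, 0 < e /\ forall x, - e <= x -> rho x = 1) /\
  (exists L : R, forall x, x <= L -> rho x = 0).

(* Laplace transform L{g; y} = <g(x), rho(x) e^{-yx}> (independent of the
   cutoff rho when supp g is in [0,oo)). *)
Definition laplace (T : (R -> R) -> R) (rho : R -> R) (y : R) : R :=
  T (fun x => rho x * exp (- (y * x))).

Definition euler_gamma : R :=
  real (Lim_seq (fun n => sum_f_R0 (fun k => / INR (S k)) n - ln (INR (S n)))).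

From Stdlib Require Import Reals Lra Lia FunctionalExtensionality.
From Coquelicot Require Import Coquelicot.
Open Scope R_scope.

(* Test the hypothesis on phi(x) = rho(x) e^{-x}, which is a Schwartz function.  Since g is
   supported in [0, oo), the Laplace transform does not depend on the cutoff, so with
   lambda = 1/y the dilation lambda <g(lambda x), phi> = <g, rho(xy) e^{-yx}> is exactly
   L{g; y}.  Moreover <delta, phi> = 1 and
     <Pf(H(x)/x), phi> = int_0^1 (e^{-x} - 1)/x dx + int_1^oo e^{-x}/x dx = - gamma,
   which follows from
     H_m - ln N = int_0^1 (1 - (1 - x/N)^N)/x dx - int_1^N (1 - x/N)^N / x dx   (N = m + 1)
   and the estimate 0 <= e^{-x} - (1 - x/N)^N <= 3 x^2 e^{-x} / N on (0, N]. *)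

(** * Smooth and Schwartz functions *)

Fixpoint Ck (n : nat) (f : R -> R) : Prop :=
  match n with
  | O => True
  | S n => (forall x, ex_derive f x) /\ Ck n (Derive f)
  end.

Lemma Ck_ext n f g : (forall x, f x = g x) -> Ck n f -> Ck n g.
Proof. intros H; replace g with f; auto. apply functional_extensionality; auto. Qed.

Lemma Ck_ex_derive_n n : forall f,
  Ck n f <-> (forall k x, (k < n)%nat -> ex_derive (Derive_n f k) x).
Proof.
  assert (DnS : forall k f, Derive_n (Derive f) k = Derive_n f (S k)).
  { induction k as [|k IHk]; intros f; simpl; auto. now rewrite IHk. }
  induction n as [|n IHn]; intros f; simpl; split.
  - intros _ k x H; lia.
  - auto.
  - intros [H1 H2] [|k] x Hk; [now simpl |].
    rewrite <- DnS. apply IHn; auto. lia.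
  - intros H. split.
    + intros x. apply (H 0%nat x). lia.
    + apply IHn. intros k x Hk. rewrite DnS. apply H. lia.
Qed.

Lemma smooth_Ck f : smooth f <-> forall n, Ck n f.
Proof.
  split.
  - intros H n. apply Ck_ex_derive_n. intros; apply H.
  - intros H n x. apply (proj1 (Ck_ex_derive_n (S n) f) (H (S n)) n x). lia.
Qed.

Lemma Ck_S n : forall f, Ck (S n) f -> Ck n f.
Proof.
  induction n as [|n IHn]; simpl; auto. intros f [H1 [H2 H3]]. split; auto.
  apply IHn. simpl; auto.
Qed.

Lemma Ck_plus n : forall f g, Ck n f -> Ck n g -> Ck n (fun x => f x + g x).
Proof.
  induction n as [|n IHn]; simpl; auto. intros f g [F1 F2] [G1 G2]. split.
  - intros x; apply (ex_derive_plus f g x); auto.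
  - apply Ck_ext with (fun x => Derive f x + Derive g x); auto.
    intros x; rewrite Derive_plus; auto.
Qed.

Lemma Ck_scal n : forall c f, Ck n f -> Ck n (fun x => c * f x).
Proof.
  induction n as [|n IHn]; simpl; auto. intros c f [F1 F2]. split.
  - intros x; apply (ex_derive_scal f c x); auto.
  - apply Ck_ext with (fun x => c * Derive f x); auto.
    intros x; rewrite Derive_scal; auto.
Qed.

Lemma Ck_mult n : forall f g, Ck n f -> Ck n g -> Ck n (fun x => f x * g x).
Proof.
  induction n as [|n IHn]; simpl; auto. intros f g [F1 F2] [G1 G2]. split.
  - intros x; apply (ex_derive_mult f g x); auto.
  - apply Ck_ext with (fun x => Derive f x * g x + f x * Derive g x).
    + intros x; rewrite Derive_mult; auto.
    + apply Ck_plus; apply IHn; auto; apply Ck_S; simpl; auto.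
Qed.

Lemma Ck_comp_scal n : forall c f, Ck n f -> Ck n (fun x => f (x * c)).
Proof.
  induction n as [|n IHn]; simpl; auto. intros c f [F1 F2]. split.
  - intros x. apply (ex_derive_comp f (fun x => x * c)); auto. auto_derive; auto.
  - apply Ck_ext with (fun x => c * Derive f (x * c)).
    + intros x. rewrite (Derive_comp f (fun x => x * c)); auto.
      * f_equal. symmetry. apply is_derive_unique. auto_derive; auto. ring.
      * auto_derive; auto.
    + apply Ck_scal. apply IHn; auto.
Qed.

Lemma Ck_exp n : Ck n exp.
Proof.
  induction n as [|n IHn]; simpl; auto. split.
  - intros; auto_derive; auto.
  - apply Ck_ext with exp; auto.
    intros x. symmetry. apply is_derive_unique. auto_derive; auto. ring.
Qed.

Lemma smooth_minus f g : smooth f -> smooth g -> smooth (fun x => f x - g x).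
Proof.
  rewrite !smooth_Ck. intros Hf Hg n.
  apply Ck_ext with (fun x => f x + (-1) * g x). { intros; ring. }
  apply Ck_plus, Ck_scal; auto.
Qed.

Lemma smooth_comp_scal c f : smooth f -> smooth (fun x => f (x * c)).
Proof. rewrite !smooth_Ck. intros Hf n. apply Ck_comp_scal, Hf. Qed.

Lemma smooth_mul_exp_lin f y : smooth f -> smooth (fun x => f x * exp (- (y * x))).
Proof.
  rewrite !smooth_Ck. intros Hf n. apply Ck_mult; auto.
  apply Ck_ext with (fun x => exp (x * - y)). { intros; f_equal; ring. }
  apply Ck_comp_scal, Ck_exp.
Qed.

Lemma exp_mul_INR n s : exp (INR n * s) = exp s ^ n.
Proof.
  induction n as [|n IHn].
  - simpl. now rewrite Rmult_0_l, exp_0.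
  - rewrite S_INR, Rmult_plus_distr_r, Rmult_1_l, exp_plus, IHn. simpl; ring.
Qed.

Lemma exp_le_compat x y : x <= y -> exp x <= exp y.
Proof. intros [H|H]; [left; apply exp_increasing | right; f_equal]; auto. Qed.

(* Apply [s <= exp s] at [s = t / (k+1)] and raise to the power [k]. *)
Lemma pow_mul_exp_neg_le k t : 0 <= t -> t ^ k * exp (- t) <= INR (S k) ^ k.
Proof.
  intros Ht. set (K := INR (S k)). assert (HK : 0 < K) by (apply lt_0_INR; lia).
  set (s := t / K). assert (Hs : 0 <= s) by (unfold s; apply Rdiv_le_0_compat; lra).
  assert (Ht' : t = K * s) by (unfold s; field; lra).
  assert (Hsk : s ^ k <= exp (INR k * s)).
  { rewrite exp_mul_INR. apply pow_incr. generalize (exp_ineq1_le s); lra. }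
  assert (Hkt : exp (INR k * s) <= exp t).
  { apply exp_le_compat. rewrite Ht'. unfold K. rewrite S_INR. nra. }
  assert (Hexp : exp t * exp (- t) = 1) by (rewrite <- exp_plus, Rplus_opp_r; apply exp_0).
  assert (0 < exp (- t)) by apply exp_pos.
  assert (0 < K ^ k) by (apply pow_lt; auto).
  rewrite Ht' at 1. rewrite Rpow_mult_distr, Rmult_assoc.
  rewrite <- (Rmult_1_r (K ^ k)) at 2. rewrite <- Hexp.
  apply Rmult_le_compat_l; [lra |]. apply Rmult_le_compat_r; lra.
Qed.

Lemma Derive_n_scal_exp_lin c y n :
  Derive_n (fun x => c * exp (- (y * x))) n = fun x => c * (- y) ^ n * exp (- (y * x)).
Proof.
  induction n as [|n IHn]; simpl.
  - apply functional_extensionality; intros; ring.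
  - rewrite IHn. apply functional_extensionality; intros x.
    apply is_derive_unique. auto_derive; auto. ring.
Qed.

Lemma scal_exp_lin_seminorm_le c y k n x : 0 < y -> 0 <= x ->
  Rabs x ^ k * Rabs (c * (- y) ^ n * exp (- (y * x)))
  <= Rabs c * Rabs y ^ n / y ^ k * INR (S k) ^ k.
Proof.
  intros Hy Hx.
  rewrite Rabs_pos_eq by lra.
  rewrite !Rabs_mult, <- RPow_abs, Rabs_Ropp, (Rabs_pos_eq (exp _)) by (left; apply exp_pos).
  assert (HB := pow_mul_exp_neg_le k (y * x) ltac:(nra)).
  rewrite Rpow_mult_distr in HB.
  assert (0 < y ^ k) by (apply pow_lt; auto).
  assert (0 <= Rabs c * Rabs y ^ n) by (apply Rmult_le_pos; [apply Rabs_pos | apply pow_le, Rabs_pos]).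
  apply Rle_trans with (Rabs c * Rabs y ^ n / y ^ k * (y ^ k * x ^ k * exp (- (y * x)))).
  - right. field. lra.
  - apply Rmult_le_compat_l; auto. apply Rdiv_le_0_compat; auto.
Qed.

(* Every seminorm is bounded by compactness on [min L 0, max E 0] and, outside it, because
   the derivatives are those of [0] or of [c e^{-yx}]. *)
Lemma schwartz_smooth_mul_exp (s : R -> R) (y c L E : R) :
  smooth s -> 0 < y -> (forall x, x <= L -> s x = 0) -> (forall x, E <= x -> s x = c) ->
  schwartz (fun x => s x * exp (- (y * x))).
Proof.
  intros Hs Hy HL HE. set (F := fun x => s x * exp (- (y * x))).
  assert (HF : smooth F) by (apply smooth_mul_exp_lin; auto).
  split; auto. intros k n.
  set (a := Rmin L 0). set (b := Rmax E 0).
  assert (Hab : a <= b) by (unfold a, b; generalize (Rmin_r L 0) (Rmax_r E 0); lra).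
  set (G := fun x => Rabs x ^ k * Rabs (Derive_n F n x)).
  assert (HG : forall x, continuous G x).
  { intros x. apply (continuous_mult (fun x => Rabs x ^ k) (fun x => Rabs (Derive_n F n x))).
    - apply (continuous_comp Rabs (fun t => t ^ k)). { apply continuous_Rabs. }
      apply (ex_derive_continuous (fun t => t ^ k)). auto_derive; auto.
    - apply continuous_Rabs_comp. apply (ex_derive_continuous (Derive_n F n)), HF. }
  destruct (bounded_continuity G a b) as [M HM]. { intros; apply HG. }
  assert (HGM : forall x, a <= x <= b -> G x <= M).
  { intros x Hx. generalize (HM x Hx) (Rle_abs (G x)). unfold norm; simpl; unfold abs; simpl. lra. }
  exists (Rmax M (Rabs c * Rabs y ^ n / y ^ k * INR (S k) ^ k)).
  intros x. fold (G x).
  destruct (Rlt_le_dec x a) as [Hxa|Hxa]; [| destruct (Rle_lt_dec x b) as [Hxb|Hxb]].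
  - assert (D : Derive_n F n x = Derive_n (fun _ => 0) n x).
    { apply Derive_n_ext_loc. apply (locally_interval _ x m_infty a); simpl; auto.
      intros t _ Ht. unfold F. rewrite HL; [ring |]. unfold a in Ht. generalize (Rmin_l L 0); lra. }
    assert (HGx : G x = 0).
    { unfold G. rewrite D. destruct n; [simpl | rewrite Derive_n_const];
      rewrite Rabs_R0, Rmult_0_r; auto. }
    apply Rle_trans with M; [| apply Rmax_l].
    assert (0 <= G a) by (apply Rmult_le_pos; [apply pow_le |]; apply Rabs_pos).
    assert (G a <= M) by (apply HGM; lra).
    lra.
  - apply Rle_trans with M; [apply HGM; lra | apply Rmax_l].
  - assert (D : Derive_n F n x = Derive_n (fun x => c * exp (- (y * x))) n x).
    { apply Derive_n_ext_loc. apply (locally_interval _ x b p_infty); simpl; auto.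
      intros t Ht _. unfold F. rewrite HE; [ring |]. unfold b in Ht. generalize (Rmax_l E 0); lra. }
    apply Rle_trans with (2 := Rmax_r _ _).
    unfold G. rewrite D, Derive_n_scal_exp_lin.
    apply scal_exp_lin_seminorm_le; auto. unfold b in Hxb. generalize (Rmax_r E 0); lra.
Qed.

Lemma schwartz_cutoff_mul_exp rho y : cutoff rho -> 0 < y ->
  schwartz (fun x => rho x * exp (- (y * x))).
Proof.
  intros [Hs [[e [He Hre]] [L HL]]] Hy.
  apply (schwartz_smooth_mul_exp rho y 1 L (- e)); auto.
Qed.

(** * Euler's constant *)

Lemma ex_RInt_derivable (f : R -> R) a b :
  a <= b -> (forall x, a <= x <= b -> ex_derive f x) -> ex_RInt f a b.
Proof.
  intros Hab Hf. apply (@ex_RInt_continuous R_CompleteNormedModule).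
  intros z Hz. rewrite Rmin_left, Rmax_right in Hz by lra.
  apply (ex_derive_continuous f), Hf, Hz.
Qed.

Lemma RInt_minus_R (f g : R -> R) a b : ex_RInt f a b -> ex_RInt g a b ->
  RInt (fun x => f x - g x) a b = RInt f a b - RInt g a b.
Proof. exact (RInt_minus f g a b). Qed.

Lemma RInt_inv_1 N : 1 <= N -> RInt (fun x => / x) 1 N = ln N.
Proof.
  intros HN. apply is_RInt_unique.
  replace (ln N) with (minus (ln N) (ln 1)) by (rewrite ln_1; apply Rminus_0_r).
  apply (is_RInt_derive ln (fun x => / x)); intros x Hx;
    rewrite Rmin_left, Rmax_right in Hx by lra.
  - auto_derive; [lra | ring].
  - apply (ex_derive_continuous (fun x => / x)). auto_derive. lra.
Qed.

(* [-(x+1) e^{-x}] is a primitive of [x e^{-x}]. *)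
Lemma RInt_id_mul_exp_neg_le N : 1 <= N ->
  ex_RInt (fun x => x * exp (- x)) 1 N /\ RInt (fun x => x * exp (- x)) 1 N <= 1.
Proof.
  intros HN.
  assert (H : is_RInt (fun x => x * exp (- x)) 1 N
                (minus (- (N + 1) * exp (- N)) (- (1 + 1) * exp (- 1)))).
  { apply (is_RInt_derive (fun x => - (x + 1) * exp (- x))); intros x _.
    - auto_derive; auto. ring.
    - apply (ex_derive_continuous (fun x => x * exp (- x))). auto_derive; auto. }
  split; [eexists; exact H |].
  rewrite (is_RInt_unique _ _ _ _ H). change (minus ?a ?b) with (Rminus a b).
  assert (0 < exp (- N)) by apply exp_pos.
  assert (exp (- 1) <= / 2).
  { replace (-1) with (- (1)) by ring. rewrite exp_Ropp. apply Rinv_le_contravar; [lra |]. generalize (exp_ineq1_le 1); lra. }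
  nra.
Qed.

Definition harmonic (m : nat) : R := sum_f_R0 (fun k => / INR (S k)) m.

Definition geom_sum (m : nat) (t : R) : R := sum_f_R0 (fun k => (1 - t) ^ k) m.

Lemma one_le_INR_S m : 1 <= INR (S m).
Proof. rewrite S_INR. generalize (pos_INR m); lra. Qed.

Lemma geom_sum_mul m t : t * geom_sum m t = 1 - (1 - t) ^ S m.
Proof.
  unfold geom_sum. assert (H := GP_finite (1 - t) m). rewrite Nat.add_1_r in H.
  replace (1 - t - 1) with (- t) in H by ring. lra.
Qed.

Lemma ex_derive_geom_sum m x : ex_derive (geom_sum m) x.
Proof.
  induction m as [|m IHm].
  - apply ex_derive_const.
  - apply (ex_derive_plus (geom_sum m) (fun t => (1 - t) ^ S m)); auto. auto_derive; auto.
Qed.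

Lemma RInt_pow_one_minus k : RInt (fun t => (1 - t) ^ k) 0 1 = / INR (S k).
Proof.
  assert (Hk : INR (S k) <> 0) by (apply not_0_INR; lia).
  apply is_RInt_unique.
  replace (/ INR (S k)) with
    (minus (- (1 - 1) ^ S k / INR (S k)) (- (1 - 0) ^ S k / INR (S k))).
  - apply (is_RInt_derive (fun t => - (1 - t) ^ S k / INR (S k))); intros x _.
    + auto_derive; auto.
      change (match k with 0%nat => 1 | S _ => INR k + 1 end) with (INR (S k)).
      replace (1 + - x) with (1 - x) by ring. field. auto.
    + apply (ex_derive_continuous (fun t => (1 - t) ^ k)). auto_derive; auto.
  - change (minus ?a ?b) with (Rminus a b).
    rewrite Rminus_diag, Rminus_0_r, pow_i, pow1 by lia.
    assert (E : - 0 / INR (S k) - - (1) / INR (S k) = / INR (S k)) by (field; auto).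
    exact E.
Qed.

Lemma RInt_geom_sum m : RInt (geom_sum m) 0 1 = harmonic m.
Proof.
  induction m as [|m IHm].
  - change (harmonic 0) with (/ INR 1). rewrite <- (RInt_pow_one_minus 0).
    apply RInt_ext. intros; reflexivity.
  - change (harmonic (S m)) with (harmonic m + / INR (S (S m))).
    rewrite <- IHm, <- RInt_pow_one_minus.
    assert (Hpow : ex_RInt (fun t => (1 - t) ^ S m) 0 1)
      by (apply ex_RInt_derivable; [lra | intros; auto_derive; auto]).
    assert (Hgeom : ex_RInt (geom_sum m) 0 1)
      by (apply ex_RInt_derivable; [lra | intros; apply ex_derive_geom_sum]).
    exact (RInt_plus (geom_sum m) (fun t => (1 - t) ^ S m) 0 1 Hgeom Hpow).
Qed.

Definition exp_approx (m : nat) (x : R) : R := (1 - x / INR (S m)) ^ S m.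

(* [(1 - exp_approx m x) / x], written as a polynomial so that it is defined at [0]. *)
Definition exp_approx_quot (m : nat) (x : R) : R :=
  / INR (S m) * geom_sum m (/ INR (S m) * x).

Lemma exp_approx_quot_eq m x : x <> 0 -> exp_approx_quot m x = (1 - exp_approx m x) / x.
Proof.
  intros Hx. unfold exp_approx_quot, exp_approx. assert (HN := one_le_INR_S m).
  replace (x / INR (S m)) with (/ INR (S m) * x) by (unfold Rdiv; ring).
  rewrite <- geom_sum_mul. field. split; lra.
Qed.

Lemma ex_derive_exp_approx_quot m x : ex_derive (exp_approx_quot m) x.
Proof.
  apply (ex_derive_scal (fun x => geom_sum m (/ INR (S m) * x))).
  apply (ex_derive_comp (geom_sum m) (fun x => / INR (S m) * x)).
  - apply ex_derive_geom_sum.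
  - auto_derive; auto.
Qed.

Lemma RInt_exp_approx_quot m : RInt (exp_approx_quot m) 0 (INR (S m)) = harmonic m.
Proof.
  assert (HN := one_le_INR_S m).
  assert (H := RInt_comp_lin (geom_sum m) (/ INR (S m)) 0 0 (INR (S m))).
  replace (/ INR (S m) * 0 + 0) with 0 in H by ring.
  replace (/ INR (S m) * INR (S m) + 0) with 1 in H by (field; lra).
  rewrite <- RInt_geom_sum, <- H.
  - apply RInt_ext. intros x _. unfold exp_approx_quot. rewrite Rplus_0_r. reflexivity.
  - apply ex_RInt_derivable; [lra |]. intros; apply ex_derive_geom_sum.
Qed.

Lemma exp_neg_sub_le t : 0 <= t -> exp (- t) - 1 + t <= t ^ 2.
Proof.
  intros Ht.
  destruct (MVT_gen (fun s => exp (- s) + s) 0 t (fun s => 1 - exp (- s))) as [c [Hc E]].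
  - intros x _. auto_derive; auto. ring.
  - intros x _. apply continuity_pt_filterlim.
    apply (ex_derive_continuous (fun s => exp (- s) + s)). auto_derive; auto.
  - rewrite Rmin_left, Rmax_right in Hc by lra.
    replace (exp (- t) - 1 + t) with ((exp (- t) + t) - (exp (- 0) + 0))
      by (rewrite Ropp_0, exp_0; ring).
    rewrite E. generalize (exp_ineq1_le (- c)). nra.
Qed.

Lemma pow_sub_pow_le m A B : 0 <= B <= A ->
  A ^ S m - B ^ S m <= INR (S m) * A ^ m * (A - B).
Proof.
  intros HAB. induction m as [|m IHm].
  - simpl. lra.
  - assert (HBA : B ^ S m <= A ^ S m) by (apply pow_incr; lra).
    assert (HA : 0 <= A ^ m) by (apply pow_le; lra).
    replace (A ^ S (S m) - B ^ S (S m))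
      with (A * (A ^ S m - B ^ S m) + B ^ S m * (A - B)) by (simpl; ring).
    replace (A ^ S m) with (A * A ^ m) in * by (simpl; ring).
    assert (A * (A * A ^ m - B ^ S m) <= A * (INR (S m) * A ^ m * (A - B)))
      by (apply Rmult_le_compat_l; lra).
    assert (B ^ S m * (A - B) <= A * A ^ m * (A - B)) by (apply Rmult_le_compat_r; lra).
    rewrite (S_INR (S m)). nra.
Qed.

(* With [t = x/N]: [e^{-x} - (1-t)^N = A^N - B^N] for [A = e^{-t} >= B = 1-t], and
   [A - B <= t^2], [A^{N-1} <= e^{-x} e^t <= 3 e^{-x}]. *)
Lemma exp_approx_error m x : 0 < x <= INR (S m) ->
  0 <= exp (- x) - exp_approx m x <= 3 * x ^ 2 * exp (- x) / INR (S m).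
Proof.
  intros Hx. assert (HN := one_le_INR_S m). set (N := INR (S m)) in *.
  set (t := x / N).
  assert (Ht : 0 < t <= 1).
  { unfold t. split; [apply Rdiv_lt_0_compat; lra |].
    apply Rmult_le_reg_r with N; [lra |].
    unfold Rdiv. rewrite Rmult_assoc, Rinv_l; lra. }
  set (A := exp (- t)). set (B := 1 - t).
  assert (HAB : 0 <= B <= A) by (unfold A, B; generalize (exp_ineq1_le (- t)); lra).
  assert (HxA : exp (- x) = A ^ S m).
  { unfold A. rewrite <- exp_mul_INR. f_equal. fold N. unfold t. field. lra. }
  assert (HA0 : 0 <= A ^ m) by (apply pow_le; unfold A; left; apply exp_pos).
  assert (HAm : A ^ m <= 3 * exp (- x)).
  { unfold A. rewrite <- exp_mul_INR.
    replace (INR m * - t) with (- x + t)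
      by (unfold t, N; rewrite S_INR; field; rewrite <- S_INR; apply not_0_INR; lia).
    rewrite exp_plus.
    assert (exp t <= 3) by (apply Rle_trans with (exp 1); [apply exp_le_compat | apply exp_le_3]; lra).
    generalize (exp_pos (- x)). nra. }
  assert (Hsub : A - B <= t ^ 2) by (unfold A, B; generalize (exp_neg_sub_le t ltac:(lra)); lra).
  assert (Hpow := pow_sub_pow_le m A B HAB). fold N in Hpow.
  unfold exp_approx. fold N. fold t. fold B. rewrite HxA. split.
  - assert (B ^ S m <= A ^ S m) by (apply pow_incr; lra). lra.
  - apply Rle_trans with (N * (3 * exp (- x)) * t ^ 2).
    + apply Rle_trans with (1 := Hpow).
      apply Rmult_le_compat; [apply Rmult_le_pos; lra | lra | apply Rmult_le_compat_l; lra | exact Hsub].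
    + rewrite <- HxA. right. unfold t. field. lra.
Qed.

Lemma exp_approx_error_div m x : 0 < x <= INR (S m) ->
  0 <= (exp (- x) - exp_approx m x) / x <= 3 / INR (S m) * (x * exp (- x)).
Proof.
  intros Hx. destruct (exp_approx_error m x Hx) as [H1 H2].
  assert (HN := one_le_INR_S m). split.
  - apply Rdiv_le_0_compat; lra.
  - apply Rle_trans with ((3 * x ^ 2 * exp (- x) / INR (S m)) / x).
    + unfold Rdiv. apply Rmult_le_compat_r; [left; apply Rinv_0_lt_compat; lra | exact H2].
    + right. field. lra.
Qed.

Definition one_sub_exp_div (x : R) : R := if Req_EM_T x 0 then 1 else (1 - exp (- x)) / x.

Lemma continuous_one_sub_exp_div x : 0 <= x -> continuous one_sub_exp_div x.
Proof.
  intros [Hx|<-].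
  - apply (continuous_ext_loc _ (fun x => (1 - exp (- x)) / x)).
    + apply (locally_interval _ x 0 p_infty); simpl; auto.
      intros y Hy _. unfold one_sub_exp_div. destruct (Req_EM_T y 0); [lra | auto].
    + apply (ex_derive_continuous (fun x => (1 - exp (- x)) / x)). auto_derive. lra.
  - (* at [0] this is the difference quotient of [e^{-x}], whose derivative there is [-1] *)
    apply continuity_pt_filterlim. intros eps Heps.
    assert (HD : derivable_pt_lim (fun x => exp (- x)) 0 (-1)).
    { apply is_derive_Reals. auto_derive; auto. rewrite Ropp_0, exp_0. ring. }
    destruct (HD eps Heps) as [d Hd]. exists d. split; [apply cond_pos |].
    intros y [_ Hy]. unfold R_dist in *. simpl in *. unfold R_dist in *.
    rewrite Rminus_0_r in Hy. unfold one_sub_exp_div.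
    destruct (Req_EM_T y 0) as [E|E]; destruct (Req_EM_T 0 0) as [E'|E']; try lra.
    + rewrite Rminus_diag, Rabs_R0; auto.
    + assert (HH := Hd y E Hy). rewrite Rplus_0_l, Ropp_0, exp_0 in HH.
      replace ((1 - exp (- y)) / y - 1) with (- ((exp (- y) - 1) / y - -1)) by (field; auto).
      rewrite Rabs_Ropp; auto.
Qed.

Lemma ex_RInt_one_sub_exp_div : ex_RInt one_sub_exp_div 0 1.
Proof.
  apply (@ex_RInt_continuous R_CompleteNormedModule).
  intros z Hz. rewrite Rmin_left in Hz by lra. apply continuous_one_sub_exp_div. lra.
Qed.

Definition exp_div_int (m : nat) : R := RInt (fun x => exp (- x) / x) 1 (INR (S m)).

Lemma harmonic_sub_ln m : harmonic m - ln (INR (S m)) =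
  RInt (exp_approx_quot m) 0 1 - exp_div_int m
  + RInt (fun x => (exp (- x) - exp_approx m x) / x) 1 (INR (S m)).
Proof.
  assert (HN := one_le_INR_S m). set (N := INR (S m)) in *.
  assert (Hinv : ex_RInt (fun x => / x) 1 N)
    by (apply ex_RInt_derivable; auto; intros; auto_derive; lra).
  assert (Hexp : ex_RInt (fun x => exp (- x) / x) 1 N)
    by (apply ex_RInt_derivable; auto; intros; auto_derive; lra).
  assert (Herr : ex_RInt (fun x => (exp (- x) - exp_approx m x) / x) 1 N)
    by (apply ex_RInt_derivable; auto; intros; unfold exp_approx; auto_derive; lra).
  assert (Hquot : forall a b, ex_RInt (exp_approx_quot m) a b).
  { intros a b. apply (@ex_RInt_continuous R_CompleteNormedModule). intros z _.
    apply (ex_derive_continuous (exp_approx_quot m)), ex_derive_exp_approx_quot. }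
  rewrite <- RInt_exp_approx_quot, <- (RInt_Chasles _ 0 1 N) by auto.
  change (plus ?a ?b) with (a + b).
  assert (Hsplit : forall x, 1 <= x -> exp_approx_quot m x
            = (/ x - exp (- x) / x) + (exp (- x) - exp_approx m x) / x).
  { intros x Hx. rewrite exp_approx_quot_eq by lra. field. lra. }
  rewrite (RInt_ext _ (fun x => (/ x - exp (- x) / x) + (exp (- x) - exp_approx m x) / x) 1 N).
  - rewrite (RInt_plus (V := R_CompleteNormedModule)), RInt_minus_R, RInt_inv_1 by
      auto using ex_RInt_minus.
    unfold exp_div_int. fold N. change (plus ?a ?b) with (a + b). ring.
  - intros x Hx. rewrite Rmin_left, Rmax_right in Hx by lra. apply Hsplit. lra.
Qed.

Lemma RInt_exp_approx_error_bounds m :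
  0 <= RInt (fun x => (exp (- x) - exp_approx m x) / x) 1 (INR (S m)) <= 3 / INR (S m).
Proof.
  assert (HN := one_le_INR_S m).
  assert (Herr : ex_RInt (fun x => (exp (- x) - exp_approx m x) / x) 1 (INR (S m)))
    by (apply ex_RInt_derivable; auto; intros; unfold exp_approx; auto_derive; lra).
  destruct (RInt_id_mul_exp_neg_le (INR (S m)) HN) as [Hex Hle].
  split.
  - apply RInt_ge_0; auto. intros x Hx. apply exp_approx_error_div. lra.
  - apply Rle_trans with (RInt (fun x => 3 / INR (S m) * (x * exp (- x))) 1 (INR (S m))).
    + apply RInt_le; auto.
      * exact (ex_RInt_scal (V := R_NormedModule) _ _ _ _ Hex).
      * intros x Hx. apply exp_approx_error_div. lra.
    + rewrite (RInt_scal (V := R_CompleteNormedModule)) by exact Hex.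
      change (scal ?a ?b) with (a * b).
      assert (0 < 3 / INR (S m)) by (apply Rdiv_lt_0_compat; lra).
      rewrite <- (Rmult_1_r (3 / INR (S m))) at 2. apply Rmult_le_compat_l; lra.
Qed.

(* On (0, 1) the two integrands differ by [(e^{-x} - exp_approx m x) / x]. *)
Lemma RInt_exp_approx_quot_bounds m :
  RInt one_sub_exp_div 0 1 <= RInt (exp_approx_quot m) 0 1
  <= RInt one_sub_exp_div 0 1 + 3 / INR (S m).
Proof.
  assert (HN := one_le_INR_S m).
  assert (Hquot : ex_RInt (exp_approx_quot m) 0 1)
    by (apply ex_RInt_derivable; [lra | intros; apply ex_derive_exp_approx_quot]).
  assert (Hdiff : ex_RInt (fun x => exp_approx_quot m x - one_sub_exp_div x) 0 1)
    by exact (ex_RInt_minus (V := R_NormedModule) _ _ _ _ Hquot ex_RInt_one_sub_exp_div).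
  assert (Hpt : forall x, 0 < x < 1 ->
            0 <= exp_approx_quot m x - one_sub_exp_div x <= 3 / INR (S m)).
  { intros x Hx.
    replace (exp_approx_quot m x - one_sub_exp_div x) with ((exp (- x) - exp_approx m x) / x)
      by (rewrite exp_approx_quot_eq by lra; unfold one_sub_exp_div;
          destruct (Req_EM_T x 0); [lra | field; lra]).
    destruct (exp_approx_error_div m x ltac:(lra)) as [H1 H2]. split; auto.
    assert (exp (- x) <= 1) by (rewrite <- exp_0; apply exp_le_compat; lra).
    assert (0 < exp (- x)) by apply exp_pos.
    assert (0 < 3 / INR (S m)) by (apply Rdiv_lt_0_compat; lra).
    assert (x * exp (- x) <= 1) by nra. nra. }
  assert (Hint := RInt_minus_R _ _ 0 1 Hquot ex_RInt_one_sub_exp_div).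
  assert (0 <= RInt (fun x => exp_approx_quot m x - one_sub_exp_div x) 0 1)
    by (apply RInt_ge_0; auto; [lra | intros; apply Hpt; auto]).
  assert (RInt (fun x => exp_approx_quot m x - one_sub_exp_div x) 0 1 <= 3 / INR (S m)).
  { apply Rle_trans with (RInt (fun _ => 3 / INR (S m)) 0 1).
    - apply RInt_le; auto; [lra | apply ex_RInt_const | intros; apply Hpt; auto].
    - rewrite RInt_const. change (scal ?a ?b) with (a * b). lra. }
  lra.
Qed.

Lemma exp_div_int_le_S m : exp_div_int m <= exp_div_int (S m).
Proof.
  assert (HN := one_le_INR_S m).
  assert (HNS : INR (S m) <= INR (S (S m))) by (rewrite (S_INR (S m)); lra).
  assert (Hex : forall a b, 1 <= a <= b -> ex_RInt (fun x => exp (- x) / x) a b)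
    by (intros a b Hab; apply ex_RInt_derivable; [lra | intros; auto_derive; lra]).
  unfold exp_div_int. rewrite <- (RInt_Chasles _ 1 (INR (S m)) (INR (S (S m)))) by (apply Hex; lra).
  change (plus ?a ?b) with (a + b).
  assert (0 <= RInt (fun x => exp (- x) / x) (INR (S m)) (INR (S (S m)))).
  { apply RInt_ge_0; [lra | apply Hex; lra |].
    intros x Hx. apply Rdiv_le_0_compat; [left; apply exp_pos | lra]. }
  lra.
Qed.

Lemma exp_div_int_le_1 m : exp_div_int m <= 1.
Proof.
  assert (HN := one_le_INR_S m). destruct (RInt_id_mul_exp_neg_le (INR (S m)) HN) as [Hex Hle].
  apply Rle_trans with (2 := Hle). apply RInt_le; [lra | | exact Hex |].
  - apply ex_RInt_derivable; [lra | intros; auto_derive; lra].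
  - intros x Hx. assert (0 < exp (- x)) by apply exp_pos.
    assert (/ x <= x) by (apply Rle_trans with 1; [rewrite <- Rinv_1; apply Rinv_le_contravar |]; lra).
    unfold Rdiv. rewrite (Rmult_comm x). apply Rmult_le_compat_l; lra.
Qed.

Lemma is_lim_seq_exp_div_int : is_lim_seq exp_div_int (real (Lim_seq exp_div_int)).
Proof.
  assert (H : ex_finite_lim_seq exp_div_int)
    by (apply (ex_finite_lim_seq_incr _ 1); [apply exp_div_int_le_S | apply exp_div_int_le_1]).
  destruct (proj1 (ex_finite_lim_seq_correct _) H) as [_ Hf].
  rewrite <- Hf. apply Lim_seq_correct'. exact H.
Qed.

Lemma is_lim_seq_3_div_INR_S : is_lim_seq (fun m => 3 / INR (S m)) 0.
Proof.
  assert (H := is_lim_seq_inv INR p_infty is_lim_seq_INR ltac:(discriminate)).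
  apply is_lim_seq_incr_1 in H. apply (is_lim_seq_scal_l _ 3) in H.
  simpl in H. rewrite Rmult_0_r in H. exact H.
Qed.

Lemma euler_gamma_eq :
  euler_gamma = RInt one_sub_exp_div 0 1 - real (Lim_seq exp_div_int).
Proof.
  set (I := RInt one_sub_exp_div 0 1). set (C := real (Lim_seq exp_div_int)).
  assert (Hquot : is_lim_seq (fun m => RInt (exp_approx_quot m) 0 1) I).
  { apply is_lim_seq_le_le with (fun _ => I) (fun m => I + 3 / INR (S m)).
    - intros; apply RInt_exp_approx_quot_bounds.
    - apply is_lim_seq_const.
    - assert (H := is_lim_seq_plus' _ _ I 0 (is_lim_seq_const I) is_lim_seq_3_div_INR_S).
      rewrite Rplus_0_r in H. exact H. }
  assert (Herr : is_lim_seq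
            (fun m => RInt (fun x => (exp (- x) - exp_approx m x) / x) 1 (INR (S m))) 0).
  { apply is_lim_seq_le_le with (fun _ => 0) (fun m => 3 / INR (S m)).
    - intros; apply RInt_exp_approx_error_bounds.
    - apply is_lim_seq_const.
    - apply is_lim_seq_3_div_INR_S. }
  assert (L : is_lim_seq (fun m => harmonic m - ln (INR (S m))) (I - C + 0)).
  { apply is_lim_seq_ext with (1 := fun m => eq_sym (harmonic_sub_ln m)).
    apply is_lim_seq_plus'; auto. apply is_lim_seq_minus'; auto.
    apply is_lim_seq_exp_div_int. }
  change euler_gamma with (real (Lim_seq (fun m => harmonic m - ln (INR (S m))))).
  rewrite (is_lim_seq_unique _ _ L). simpl. ring.
Qed.

Lemma pf_H_over_x_exp_neg phi : (forall x, 0 <= x -> phi x = exp (- x)) ->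
  pf_H_over_x phi = - euler_gamma.
Proof.
  intros Hphi. unfold pf_H_over_x. rewrite euler_gamma_eq.
  rewrite (RInt_ext _ (fun x => - one_sub_exp_div x) 0 1).
  2: { intros x Hx. rewrite Rmin_left, Rmax_right in Hx by lra. rewrite !Hphi by lra.
       unfold one_sub_exp_div. destruct (Req_EM_T x 0); [lra |].
       rewrite Ropp_0, exp_0. change (@eq R ((exp (- x) - 1) / x) (- ((1 - exp (- x)) / x))).
       field. auto. }
  rewrite (RInt_opp (V := R_CompleteNormedModule)) by apply ex_RInt_one_sub_exp_div.
  (* [Lim f p_infty] is the limit of the sequence [f (INR n)] *)
  assert (L : is_lim_seq (fun n => RInt (fun x => phi x / x) 1 (INR n))
                (real (Lim_seq exp_div_int))).
  { apply is_lim_seq_incr_1. apply is_lim_seq_ext with (2 := is_lim_seq_exp_div_int).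
    intros n. apply RInt_ext. intros x Hx.
    assert (0 <= Rmin 1 (INR (S n))) by (apply Rmin_glb; [lra | apply pos_INR]).
    rewrite Hphi by lra. reflexivity. }
  unfold Lim. simpl Rbar_loc_seq. rewrite (is_lim_seq_unique _ _ L). simpl.
  change (opp ?a) with (- a). ring.
Qed.

(** * Cutoffs and dilations *)

Lemma cutoff_eq_1 rho x : cutoff rho -> 0 <= x -> rho x = 1.
Proof. intros [_ [[e [He Hre]] _]] Hx. apply Hre. lra. Qed.

Lemma cutoff_scale rho y : cutoff rho -> 0 < y <= 1 -> cutoff (fun x => rho (x * y)).
Proof.
  intros [Hs [[e [He Hre]] [L HL]]] Hy. split; [| split].
  - now apply smooth_comp_scal.
  - exists e. split; auto. intros x Hx. apply Hre.
    destruct (Rle_dec 0 x); nra.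
  - exists (L / y). intros x Hx. apply HL.
    apply Rmult_le_reg_r with (/ y). { apply Rinv_0_lt_compat; lra. }
    rewrite Rmult_assoc, Rinv_r, Rmult_1_r by lra. exact Hx.
Qed.

(* Two cutoffs differ by a smooth function supported in a compact subset of (-oo, 0). *)
Lemma laplace_cutoff_indep g rho1 rho2 y :
  tempered g -> supported_nonneg g -> cutoff rho1 -> cutoff rho2 -> 0 < y ->
  laplace g rho1 y = laplace g rho2 y.
Proof.
  intros [Hadd _] Hsupp Hrho1 Hrho2 Hy.
  destruct Hrho1 as [Hs1 [[e1 [He1 Hre1]] [L1 HL1]]].
  destruct Hrho2 as [Hs2 [[e2 [He2 Hre2]] [L2 HL2]]].
  set (L := Rmin L1 L2). set (r := - Rmin e1 e2).
  assert (Hr : r < 0) by (assert (0 < Rmin e1 e2) by (apply Rmin_glb_lt; auto); unfold r; lra).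
  assert (Hzero : forall x, x <= L \/ r <= x -> rho1 x - rho2 x = 0).
  { intros x [Hx|Hx].
    - generalize (Rmin_l L1 L2) (Rmin_r L1 L2); fold L; intros.
      rewrite HL1, HL2 by lra. ring.
    - generalize (Rmin_l e1 e2) (Rmin_r e1 e2); intros.
      rewrite Hre1, Hre2 by (unfold r in Hx; lra). ring. }
  set (K := fun x => (rho1 x - rho2 x) * exp (- (y * x))).
  assert (HK : schwartz K).
  { apply (schwartz_smooth_mul_exp _ y 0 L r); [now apply smooth_minus | exact Hy | |];
      intros; apply Hzero; auto. }
  assert (HgK : g K = 0).
  { apply Hsupp; [apply HK |]. exists L, r. split; auto.
    intros x Hx. unfold K. rewrite Hzero; auto. ring. }
  assert (Hsplit : (fun x => rho1 x * exp (- (y * x)))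
                   = (fun x => rho2 x * exp (- (y * x)) + K x)).
  { apply functional_extensionality. intros x. unfold K. ring. }
  unfold laplace. rewrite Hsplit, Hadd, HgK.
  - ring.
  - apply (schwartz_smooth_mul_exp _ y 1 L2 (- e2)); auto.
  - exact HK.
Qed.

Lemma dilate_inv_cutoff_exp g rho y : 0 < y ->
  dilate g (/ y) (fun x => rho x * exp (- x)) = y * laplace g (fun x => rho (x * y)) y.
Proof.
  intros Hy. unfold dilate, laplace. rewrite Rinv_inv. do 2 f_equal.
  apply functional_extensionality. intros x.
  replace (x / / y) with (x * y) by (field; lra). f_equal. f_equal. f_equal. ring.
Qed.

Theorem theorem3p1 (g : (R -> R) -> R) (a b : R) :
  tempered g ->
  supported_nonneg g ->
  (forall phi : R -> R, schwartz phi ->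
     filterlim
       (fun lam => lam * (dilate g lam phi
          - (a / lam * dirac phi + b * ln lam / lam * dirac phi
             + b / lam * pf_H_over_x phi)))
       (Rbar_locally p_infty) (locally 0)) ->
  forall rho : R -> R, cutoff rho ->
    filterlim
      (fun y => laplace g rho y - (a - b * euler_gamma + b * ln (/ y)))
      (at_right 0) (locally 0).
Proof.
  intros Hg Hsupp Hasymp rho Hrho.
  set (phi := fun x => rho x * exp (- x)).
  assert (Hphi : schwartz phi).
  { replace phi with (fun x => rho x * exp (- (1 * x)))
      by (apply functional_extensionality; intros x; now rewrite Rmult_1_l).
    apply schwartz_cutoff_mul_exp; auto; lra. }
  assert (Hdirac : dirac phi = 1).
  { unfold dirac, phi. rewrite (cutoff_eq_1 rho 0 Hrho (Rle_refl 0)), Ropp_0, exp_0. ring. }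
  assert (Hpf : pf_H_over_x phi = - euler_gamma).
  { apply pf_H_over_x_exp_neg. intros x Hx. unfold phi. rewrite (cutoff_eq_1 rho x Hrho Hx). ring. }
  eapply filterlim_ext_loc.
  2: exact (filterlim_comp _ _ _ Rinv _ _ _ _ filterlim_Rinv_0_right (Hasymp phi Hphi)).
  exists (mkposreal 1 Rlt_0_1). intros y Hy Hy0. simpl in Hy0.
  change (Rabs (y - 0) < 1) in Hy. rewrite Rminus_0_r in Hy. apply Rabs_lt_between in Hy.
  rewrite Hdirac, Hpf. unfold phi. rewrite dilate_inv_cutoff_exp,
    (laplace_cutoff_indep g _ rho y Hg Hsupp (cutoff_scale rho y Hrho ltac:(lra)) Hrho Hy0)
    by lra.
  field. lra.
Qed.
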